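(* Let $\mathbb{S}\subseteq\mathbb{R}$ be an interval, let $\gamma>0$, let $Q:\mathbb{S}\to\mathbb{R}$ be differentiable with $q=Q'$, and let $$H(z)=\gamma\log\big(1+e^{Q(z)/\gamma}\big),\qquad p(z)=\frac{1}{1+e^{-Q(z)/\gamma}},$$ with $H$ twice continuously differentiable on $\mathbb{S}$. Then the scalar matching loss $\mathcal{L}_m(\hat s,s)=H(\hat s)-H(s)-(\hat s-s)H'(s)$ is convex in $\hat s$ over $\mathbb{S}$ (for all $s\in\mathbb{S}$) if and only if $$q'(z)+\frac{1}{\gamma}\,[1-p(z)]\,q^2(z)\ge0\quad\text{for all }z\in\mathbb{S}.$$
   Context: $H$ is the $\gamma$-regularized composite Softplus primitive; its derivative (the link) is $H'(z)=q(z)p(z)$. *)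

From Stdlib Require Import Reals.
From Coquelicot Require Import Coquelicot.
Open Scope R_scope.

Definition is_interval (S : R -> Prop) : Prop :=
  forall x y z, S x -> S z -> x <= y -> y <= z -> S y.

(* f has derivative l at x relative to S (one-sided at endpoints). *)
Definition is_derive_within (S : R -> Prop) (f : R -> R) (x l : R) : Prop :=
  filterlim (fun y => (f y - f x) / (y - x))
    (within (fun y => S y /\ y <> x) (locally x)) (locally l).

Definition continuous_within (S : R -> Prop) (f : R -> R) (x : R) : Prop :=
  filterlim f (within S (locally x)) (locally (f x)).

Definition differentiable_on (S : R -> Prop) (f : R -> R) : Prop :=
  forall x, S x -> exists l, is_derive_within S f x l.

Definition C2_on (S : R -> Prop) (f : R -> R) : Prop :=
  exists f1 f2 : R -> R,
    forall x, S x ->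
      is_derive_within S f x (f1 x) /\
      is_derive_within S f1 x (f2 x) /\
      continuous_within S f2 x.

Definition convex_on (S : R -> Prop) (f : R -> R) : Prop :=
  forall x y t, S x -> S y -> 0 <= t <= 1 ->
    f (t * x + (1 - t) * y) <= t * f x + (1 - t) * f y.

Definition Hsp (gam : R) (Q : R -> R) (z : R) : R :=
  gam * ln (1 + exp (Q z / gam)).

Definition psp (gam : R) (Q : R -> R) (z : R) : R :=
  1 / (1 + exp (- Q z / gam)).

(* scalar matching loss, with dH_s = H'(s) *)
Definition matching_loss (H : R -> R) (dH_s s sh : R) : R :=
  H sh - H s - (sh - s) * dH_s.

(* H = gam ln (1 + exp (Q / gam)) has H' = p q and H'' = p (q' + (1 - p) q^2 / gam), where
   p = 1 / (1 + exp (- Q / gam)) > 0 is the sigmoid of Q / gam.  The matching loss differs from H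
   by an affine function of sh, so it is convex iff H is, and on an interval a twice
   differentiable H is convex iff H'' >= 0: convexity makes H' nondecreasing, hence H'' >= 0 as a
   limit of nonnegative difference quotients; conversely H'' >= 0 makes H' nondecreasing by the
   mean value theorem, which gives the tangent-line inequality and hence convexity.  One-sided
   derivatives at the endpoints of S are handled by restricting to subintervals. *)

From Stdlib Require Import Reals Lra.
From Coquelicot Require Import Coquelicot.
Open Scope R_scope.

Definition slope (f : R -> R) (x y : R) : R := (f y - f x) / (y - x).

Lemma slope_comm f x y : slope f x y = slope f y x.
Proof.
unfold slope, Rdiv.
replace (y - x) with (- (x - y)) by ring.
rewrite Rinv_opp. ring.
Qed.

(* [is_derive_within S f x l] unfolds to [filterlim (slope f x) (punctured S x) (locally l)]. *)
Definition punctured (S : R -> Prop) (x : R) : (R -> Prop) -> Prop :=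
  within (fun y => S y /\ y <> x) (locally x).

Global Instance punctured_filter S x : Filter (punctured S x).
Proof. apply within_filter, locally_filter. Qed.

Lemma punctured_forall S x (P : R -> Prop) :
  (forall y, S y -> y <> x -> P y) -> punctured S x P.
Proof. intros HP. unfold punctured, within. apply filter_forall. intros y [Sy yx]. auto. Qed.

Lemma filterlim_Rplus {T} (F : (T -> Prop) -> Prop) {FF : Filter F} f g a b :
  filterlim f F (locally a) -> filterlim g F (locally b) ->
  filterlim (fun t => f t + g t) F (locally (a + b)).
Proof. intros Hf Hg. exact (filterlim_comp_2 f g Rplus Hf Hg (filterlim_plus a b)). Qed.

Lemma filterlim_Rmult {T} (F : (T -> Prop) -> Prop) {FF : Filter F} f g a b :
  filterlim f F (locally a) -> filterlim g F (locally b) ->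
  filterlim (fun t => f t * g t) F (locally (a * b)).
Proof. intros Hf Hg. exact (filterlim_comp_2 f g Rmult Hf Hg (filterlim_mult a b)). Qed.

Lemma filterlim_le_const {T} (F : (T -> Prop) -> Prop) {FF : ProperFilter' F} g l c :
  filterlim g F (locally l) -> F (fun t => g t <= c) -> l <= c.
Proof. intros Hg Hc. exact (closed_filterlim_loc g _ l Hg Hc (closed_le c)). Qed.

Lemma filterlim_ge_const {T} (F : (T -> Prop) -> Prop) {FF : ProperFilter' F} g l c :
  filterlim g F (locally l) -> F (fun t => c <= g t) -> c <= l.
Proof. intros Hg Hc. exact (closed_filterlim_loc g _ l Hg Hc (closed_ge c)). Qed.

Lemma is_interval_comb S x y t : is_interval S -> S x -> S y -> 0 <= t <= 1 ->
  S (t * x + (1 - t) * y).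
Proof.
intros HI Sx Sy Ht.
destruct (Rle_lt_dec x y).
- apply (HI x _ y); auto; nra.
- apply (HI y _ x); auto; nra.
Qed.

Lemma is_interval_restrict S a b : is_interval S ->
  is_interval (fun t => S t /\ a <= t <= b).
Proof. intros HI x y z [Sx Hx] [Sz Hz] xy yz. split; [apply (HI x y z)|]; auto; lra. Qed.

Lemma punctured_proper S x y : is_interval S -> S x -> S y -> y <> x ->
  ProperFilter' (punctured S x).
Proof.
intros HI Sx Sy yx. constructor; [|exact _].
intros [e He].
assert (Hd : 0 < Rabs (y - x)) by (apply Rabs_pos_lt; lra).
(* move from x towards y by a fraction [t] of the way, at distance at most e / 2 *)
set (t := Rmin 1 (e / (2 * Rabs (y - x)))).
assert (Ht : 0 < t <= 1).
{ split; [apply Rmin_glb_lt|apply Rmin_l]; [lra|].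
  apply Rdiv_lt_0_compat; [apply cond_pos|lra]. }
assert (Hte : t * Rabs (y - x) <= e / 2).
{ apply (Rle_trans _ (e / (2 * Rabs (y - x)) * Rabs (y - x))).
  - apply Rmult_le_compat_r; [apply Rabs_pos|apply Rmin_r].
  - right. field. lra. }
apply (He (t * y + (1 - t) * x)).
- change (Rabs (t * y + (1 - t) * x - x) < e).
  replace (t * y + (1 - t) * x - x) with (t * (y - x)) by ring.
  rewrite Rabs_mult, (Rabs_right t) by lra.
  pose proof (cond_pos e). lra.
- split.
  + apply is_interval_comb; auto; lra.
  + intros E. apply yx. apply (Rmult_eq_reg_l t); [|lra]. lra.
Qed.

Lemma punctured_proper_in_interval S a b x : is_interval S -> S a -> S b -> a < b -> S x ->
  ProperFilter' (punctured S x).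
Proof.
intros HI Sa Sb ab Sx.
destruct (Req_dec a x) as [<-|ax].
- apply (punctured_proper S a b); auto; lra.
- apply (punctured_proper S x a); auto.
Qed.

(* Caratheodory's form of differentiability, which turns the chain rule into a product of limits *)
Lemma is_derive_slope_continuous (g : R -> R) v g' : is_derive g v g' ->
  filterlim (fun u => if Req_EM_T u v then g' else slope g v u) (locally v) (locally g').
Proof.
intros Hg. apply is_derive_Reals in Hg.
intros P [e He]. destruct (Hg e (cond_pos e)) as [d Hd].
exists d. intros u Hu. apply He. destruct (Req_EM_T u v) as [_|uv].
- apply ball_center.
- change (Rabs (u - v) < d) in Hu.
  change (Rabs (slope g v u - g') < e). unfold slope.
  replace u with (v + (u - v)) at 1 by ring.
  apply Hd; [lra|exact Hu].
Qed.

Section DeriveWithin.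

Variable S : R -> Prop.

Lemma is_derive_within_continuous f x l :
  is_derive_within S f x l -> filterlim f (punctured S x) (locally (f x)).
Proof.
intros Hf.
apply (filterlim_ext_loc (fun y => f x + slope f x y * (y - x))).
- apply punctured_forall. intros y _ yx. unfold slope. field. lra.
- replace (locally (f x)) with (locally (f x + l * (x - x))) by (f_equal; ring).
  apply filterlim_Rplus; [exact _|apply filterlim_const|].
  apply filterlim_Rmult; [exact _|exact Hf|].
  apply (filterlim_Rplus _ (fun y => y) (fun _ => - x)); [|apply filterlim_const].
  intros P HP. unfold filtermap, punctured, within. apply (filter_imp P); auto.
Qed.

Lemma is_derive_within_mult f g x a b :
  is_derive_within S f x a -> is_derive_within S g x b ->
  is_derive_within S (fun y => f y * g y) x (a * g x + f x * b).
Proof.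
intros Hf Hg.
apply (filterlim_ext_loc (fun y => slope f x y * g y + f x * slope g x y)).
- apply punctured_forall. intros y _ yx. unfold slope. field. lra.
- apply filterlim_Rplus; [exact _| |].
  + apply filterlim_Rmult; [exact _|exact Hf|exact (is_derive_within_continuous g x b Hg)].
  + apply filterlim_Rmult; [exact _|apply filterlim_const|exact Hg].
Qed.

Lemma is_derive_within_affine f x l c k :
  is_derive_within S f x l ->
  is_derive_within S (fun y => c * f y + k * y) x (c * l + k).
Proof.
intros Hf.
apply (filterlim_ext_loc (fun y => c * slope f x y + k)).
- apply punctured_forall. intros y _ yx. unfold slope. field. lra.
- apply filterlim_Rplus; [exact _| |apply filterlim_const].
  apply filterlim_Rmult; [exact _|apply filterlim_const|exact Hf].
Qed.

Lemma is_derive_within_comp (g : R -> R) Q x l g' :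
  is_derive_within S Q x l -> is_derive g (Q x) g' ->
  is_derive_within S (fun y => g (Q y)) x (g' * l).
Proof.
intros HQ Hg.
apply (filterlim_ext_loc (fun y =>
  (if Req_EM_T (Q y) (Q x) then g' else slope g (Q x) (Q y)) * slope Q x y)).
- apply punctured_forall. intros y _ yx. unfold slope.
  destruct (Req_EM_T (Q y) (Q x)) as [E|E].
  + rewrite E. unfold Rdiv. ring.
  + field. lra.
- apply filterlim_Rmult; [exact _| |exact HQ].
  exact (filterlim_comp _ _ _ Q _ _ _ _
           (is_derive_within_continuous Q x l HQ) (is_derive_slope_continuous g _ _ Hg)).
Qed.

Lemma is_derive_within_ext f g x l : S x -> (forall y, S y -> f y = g y) ->
  is_derive_within S f x l -> is_derive_within S g x l.
Proof.
intros Sx E Hf.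
apply (filterlim_ext_loc (slope f x)); [|exact Hf].
apply punctured_forall. intros y Sy _. unfold slope. rewrite !E; auto.
Qed.

Lemma is_derive_within_subset (S' : R -> Prop) f x l : (forall y, S' y -> S y) ->
  is_derive_within S f x l -> is_derive_within S' f x l.
Proof.
intros HS Hf. apply (filterlim_filter_le_1 _ (F := punctured S x)); [|exact Hf].
intros P HP. unfold punctured, within in *.
refine (filter_imp _ _ _ HP). intros y HPy [S'y yx]. auto.
Qed.

Lemma derivable_pt_lim_of_within f x l d : 0 < d -> (forall y, Rabs (y - x) < d -> S y) ->
  is_derive_within S f x l -> derivable_pt_lim f x l.
Proof.
intros Hd HS Hf e He.
destruct (Hf (ball l (mkposreal e He))) as [d' Hd'].
{ exists (mkposreal e He). auto. }
assert (Hdd : 0 < Rmin d d') by (apply Rmin_glb_lt; [lra|apply cond_pos]).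
exists (mkposreal _ Hdd). intros h h0 Hh. simpl in Hh.
assert (Hh' : Rabs (x + h - x) < Rmin d d') by (replace (x + h - x) with h by ring; exact Hh).
pose proof (Rmin_l d d'). pose proof (Rmin_r d d').
specialize (Hd' (x + h)). unfold slope in Hd'.
replace (x + h - x) with h in Hd' by ring.
apply Hd'.
- change (Rabs (x + h - x) < d'). lra.
- split; [apply HS; lra|lra].
Qed.

End DeriveWithin.

Definition nondecreasing_on (S : R -> Prop) (f : R -> R) : Prop :=
  forall x y, S x -> S y -> x <= y -> f x <= f y.

Lemma convex_on_affine_shift S f g c d : (forall x, g x = f x + c * x + d) ->
  convex_on S f -> convex_on S g.
Proof.
intros E Hf x y t Sx Sy Ht. rewrite !E.
specialize (Hf x y t Sx Sy Ht). nra.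
Qed.

Lemma convex_slope_right S f x t y : convex_on S f -> S x -> S y -> x < t <= y ->
  slope f x t <= slope f x y.
Proof.
intros Hf Sx Sy Ht.
set (lam := (t - x) / (y - x)).
assert (Hlam : 0 <= lam <= 1).
{ unfold lam. split; [apply Rdiv_le_0_compat|apply (Rdiv_le_1 (t - x))]; lra. }
pose proof (Hf y x lam Sy Sx Hlam) as Hc.
replace (lam * y + (1 - lam) * x) with t in Hc by (unfold lam; field; lra).
unfold slope. apply (Rmult_le_reg_r (t - x)); [lra|].
replace ((f t - f x) / (t - x) * (t - x)) with (f t - f x) by (field; lra).
replace ((f y - f x) / (y - x) * (t - x)) with (lam * (f y - f x)) by (unfold lam; field; lra).
lra.
Qed.

Lemma convex_slope_left S f x t y : convex_on S f -> S x -> S y -> x <= t < y ->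
  slope f x y <= slope f t y.
Proof.
intros Hf Sx Sy Ht.
set (lam := (y - t) / (y - x)).
assert (Hlam : 0 <= lam <= 1).
{ unfold lam. split; [apply Rdiv_le_0_compat|apply (Rdiv_le_1 (y - t))]; lra. }
pose proof (Hf x y lam Sx Sy Hlam) as Hc.
replace (lam * x + (1 - lam) * y) with t in Hc by (unfold lam; field; lra).
unfold slope. apply (Rmult_le_reg_r (y - t)); [lra|].
replace ((f y - f t) / (y - t) * (y - t)) with (f y - f t) by (field; lra).
replace ((f y - f x) / (y - x) * (y - t)) with (lam * (f y - f x)) by (unfold lam; field; lra).
lra.
Qed.

Lemma convex_derive_nondecreasing S f f' : is_interval S -> convex_on S f ->
  (forall x, S x -> is_derive_within S f x (f' x)) -> nondecreasing_on S f'.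
Proof.
intros HI Hf Hf' x y Sx Sy xy.
destruct (Req_dec x y) as [<-|ne]; [lra|].
set (Sxy := fun t => S t /\ x <= t <= y).
assert (HIxy : is_interval Sxy) by apply (is_interval_restrict S x y HI).
assert (Sxy_x : Sxy x) by (split; auto; lra).
assert (Sxy_y : Sxy y) by (split; auto; lra).
assert (Dxy : forall z, S z -> is_derive_within Sxy f z (f' z)).
{ intros z Sz. apply (is_derive_within_subset S); [now intros t []|auto]. }
apply (Rle_trans _ (slope f x y)).
- pose proof (punctured_proper Sxy x y HIxy Sxy_x Sxy_y ltac:(lra)).
  apply (filterlim_le_const _ (slope f x)); [apply Dxy; auto|].
  apply punctured_forall. intros t [St Ht] tx.
  apply (convex_slope_right S); auto; lra.
- pose proof (punctured_proper Sxy y x HIxy Sxy_y Sxy_x ltac:(lra)).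
  apply (filterlim_ge_const _ (slope f y)); [apply Dxy; auto|].
  apply punctured_forall. intros t [St Ht] ty.
  rewrite (slope_comm f y t). apply (convex_slope_left S); auto; lra.
Qed.

Lemma nondecreasing_derive_nonneg S g x l : ProperFilter' (punctured S x) -> S x ->
  nondecreasing_on S g -> is_derive_within S g x l -> 0 <= l.
Proof.
intros FF Sx Hg Hl.
apply (filterlim_ge_const _ (slope g x) l 0 Hl).
apply punctured_forall. intros y Sy yx.
destruct (Rle_lt_dec x y) as [xy|yx'].
- unfold slope. apply Rdiv_le_0_compat; [|lra].
  pose proof (Hg x y Sx Sy xy). lra.
- rewrite slope_comm. unfold slope. apply Rdiv_le_0_compat; [|lra].
  pose proof (Hg y x Sy Sx ltac:(lra)). lra.
Qed.

Section NonnegDerivative.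

Variables (S : R -> Prop) (f f' : R -> R).
Hypothesis HI : is_interval S.
Hypothesis Hf' : forall x, S x -> is_derive_within S f x (f' x) /\ 0 <= f' x.

(* between two points of S the derivative is two-sided, so the mean value theorem applies *)
Lemma derive_nonneg_nondecreasing_interior a b x y : S a -> S b -> a < x <= y -> y < b ->
  f x <= f y.
Proof.
intros Sa Sb Hxy Hyb.
destruct (Req_dec x y) as [<-|ne]; [lra|].
destruct (MVT_cor2 f f' x y) as [c [Hc Hcxy]]; [lra| |].
- intros c Hc.
  apply (derivable_pt_lim_of_within S f c (f' c) (Rmin (c - a) (b - c))).
  + apply Rmin_glb_lt; lra.
  + intros z Hz. apply Rabs_def2 in Hz. pose proof (Rmin_l (c - a) (b - c)).
    pose proof (Rmin_r (c - a) (b - c)). apply (HI a z b); auto; lra.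
  + apply Hf'. apply (HI a c b); auto; lra.
- assert (0 <= f' c) by (apply Hf'; apply (HI x c y); [apply (HI a x b)|apply (HI a y b)|..]; auto; lra).
  nra.
Qed.

(* the endpoints are reached by the one-sided continuity of f *)
Lemma derive_nonneg_nondecreasing : nondecreasing_on S f.
Proof.
intros x y Sx Sy xy.
destruct (Req_dec x y) as [<-|ne]; [lra|].
set (m := (x + y) / 2).
assert (Sm : S m) by (apply (HI x m y); auto; unfold m; lra).
apply (Rle_trans _ (f m)).
- set (Sxm := fun t => S t /\ x <= t <= m).
  pose proof (punctured_proper Sxm x m (is_interval_restrict S x m HI)
                ltac:(split; auto; unfold m; lra) ltac:(split; auto; unfold m; lra)
                ltac:(unfold m; lra)).
  apply (filterlim_le_const _ f).
  + apply (is_derive_within_continuous Sxm f x (f' x)).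
    apply (is_derive_within_subset S); [now intros t []|apply Hf'; auto].
  + apply punctured_forall. intros t [St Ht] tx.
    apply (derive_nonneg_nondecreasing_interior x y); auto; unfold m in *; lra.
- set (Smy := fun t => S t /\ m <= t <= y).
  pose proof (punctured_proper Smy y m (is_interval_restrict S m y HI)
                ltac:(split; auto; unfold m; lra) ltac:(split; auto; unfold m; lra)
                ltac:(unfold m; lra)).
  apply (filterlim_ge_const _ f).
  + apply (is_derive_within_continuous Smy f y (f' y)).
    apply (is_derive_within_subset S); [now intros t []|apply Hf'; auto].
  + apply punctured_forall. intros t [St Ht] ty.
    apply (derive_nonneg_nondecreasing_interior x y); auto; unfold m in *; lra.
Qed.

End NonnegDerivative.

Lemma nondecreasing_derive_tangent S f f' : is_interval S ->
  (forall x, S x -> is_derive_within S f x (f' x)) -> nondecreasing_on S f' ->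
  forall x y, S x -> S y -> f x + f' x * (y - x) <= f y.
Proof.
intros HI Hf Hf' x y Sx Sy.
destruct (Rle_lt_dec x y) as [xy|yx].
- set (Sxy := fun t => S t /\ x <= t <= y).
  assert (Hmono : nondecreasing_on Sxy (fun t => 1 * f t + - f' x * t)).
  { apply (derive_nonneg_nondecreasing _ _ (fun t => 1 * f' t + - f' x));
      [apply is_interval_restrict; auto|].
    intros t [St Ht]. split.
    + apply is_derive_within_affine.
      apply (is_derive_within_subset S); [now intros u []|auto].
    + pose proof (Hf' x t Sx St ltac:(lra)). lra. }
  pose proof (Hmono x y ltac:(split; auto; lra) ltac:(split; auto; lra) xy). lra.
- set (Syx := fun t => S t /\ y <= t <= x).
  assert (Hmono : nondecreasing_on Syx (fun t => -1 * f t + f' x * t)).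
  { apply (derive_nonneg_nondecreasing _ _ (fun t => -1 * f' t + f' x));
      [apply is_interval_restrict; auto|].
    intros t [St Ht]. split.
    + apply is_derive_within_affine.
      apply (is_derive_within_subset S); [now intros u []|auto].
    + pose proof (Hf' t x St Sx ltac:(lra)). lra. }
  pose proof (Hmono y x ltac:(split; auto; lra) ltac:(split; auto; lra) ltac:(lra)). lra.
Qed.

Lemma convex_of_tangents S f f' : is_interval S ->
  (forall x y, S x -> S y -> f x + f' x * (y - x) <= f y) -> convex_on S f.
Proof.
intros HI Ht x y t Sx Sy Ht01.
set (z := t * x + (1 - t) * y).
assert (Sz : S z) by (apply is_interval_comb; auto).
pose proof (Ht z x Sz Sx) as Hx. pose proof (Ht z y Sz Sy) as Hy.
assert (Hx' : t * (f z + f' z * (x - z)) <= t * f x) by (apply Rmult_le_compat_l; lra).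
assert (Hy' : (1 - t) * (f z + f' z * (y - z)) <= (1 - t) * f y)
  by (apply Rmult_le_compat_l; lra).
assert (E : t * (f z + f' z * (x - z)) + (1 - t) * (f z + f' z * (y - z)) = f z)
  by (unfold z; ring).
lra.
Qed.

Lemma convex_on_iff_second_derive_nonneg S f f1 f2 a b :
  is_interval S -> S a -> S b -> a < b ->
  (forall x, S x -> is_derive_within S f x (f1 x) /\ is_derive_within S f1 x (f2 x)) ->
  (convex_on S f <-> forall x, S x -> 0 <= f2 x).
Proof.
intros HI Sa Sb ab Hf. split.
- intros Hc x Sx.
  apply (nondecreasing_derive_nonneg S f1 x);
    [apply (punctured_proper_in_interval S a b); auto|auto| |apply Hf; auto].
  apply (convex_derive_nondecreasing S f); auto. apply Hf.
- intros Hf2.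
  apply (convex_of_tangents S f f1); auto.
  apply nondecreasing_derive_tangent; [auto|apply Hf|].
  apply (derive_nonneg_nondecreasing S f1 f2); auto.
  intros x Sx. split; [apply Hf|]; auto.
Qed.

(* [Hsp gam Q z] and [psp gam Q z] unfold to [softplus gam (Q z)] and [sigmoid gam (Q z)]. *)
Definition softplus (gam v : R) : R := gam * ln (1 + exp (v / gam)).

Definition sigmoid (gam v : R) : R := 1 / (1 + exp (- v / gam)).

Lemma sigmoid_pos gam v : 0 < sigmoid gam v.
Proof. unfold sigmoid. apply Rdiv_lt_0_compat; [lra|]. pose proof (exp_pos (- v / gam)). lra. Qed.

Section SoftplusDerivatives.

Variable gam : R.
Hypothesis gam_pos : 0 < gam.

Lemma is_derive_softplus v : is_derive (softplus gam) v (sigmoid gam v).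
Proof.
unfold softplus, sigmoid. auto_derive.
- pose proof (exp_pos (v / gam)). lra.
- unfold Rdiv. replace (- v * / gam) with (- (v * / gam)) by ring. rewrite exp_Ropp.
  pose proof (exp_pos (v * / gam)). set (e := exp (v * / gam)) in *. field. split; lra.
Qed.

Lemma is_derive_sigmoid v :
  is_derive (sigmoid gam) v (/ gam * sigmoid gam v * (1 - sigmoid gam v)).
Proof.
unfold sigmoid. auto_derive.
- pose proof (exp_pos (- v / gam)). lra.
- unfold Rdiv. pose proof (exp_pos (- v * / gam)).
  set (e := exp (- v * / gam)) in *. field. split; lra.
Qed.

(* [1 + exp (- v / gam)] is [/ sigmoid gam v]: the factor that recovers [q] from [H' = p q] *)
Lemma is_derive_sigmoid_denom v :
  is_derive (fun v => 1 + exp (- v / gam)) v (- / gam * exp (- v / gam)).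
Proof. auto_derive; [auto|unfold Rdiv; set (e := exp (- v * / gam)); field; lra]. Qed.

End SoftplusDerivatives.

Section SoftplusOfQ.

Variables (S : R -> Prop) (gam : R) (Q q f1 f2 : R -> R).
Hypothesis gam_pos : 0 < gam.
Hypothesis S_proper : forall z, S z -> ProperFilter' (punctured S z).
Hypothesis HQ : forall z, S z -> is_derive_within S Q z (q z).
Hypothesis Hf1 : forall z, S z -> is_derive_within S (Hsp gam Q) z (f1 z).
Hypothesis Hf2 : forall z, S z -> is_derive_within S f1 z (f2 z).

Lemma Hsp_derive_eq z : S z -> f1 z = psp gam Q z * q z.
Proof.
intros Sz. pose proof (S_proper z Sz).
apply (filterlim_locally_unique _ _ _ (Hf1 z Sz)).
exact (is_derive_within_comp S (softplus gam) Q z _ _ (HQ z Sz) (is_derive_softplus gam gam_pos _)).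
Qed.

Lemma Hsp_second_derive_eq z dq : S z -> is_derive_within S q z dq ->
  f2 z = psp gam Q z * (dq + / gam * (1 - psp gam Q z) * q z ^ 2).
Proof.
intros Sz Hq. pose proof (S_proper z Sz).
assert (Hpq : is_derive_within S f1 z
   (/ gam * psp gam Q z * (1 - psp gam Q z) * q z * q z + psp gam Q z * dq)).
{ apply (is_derive_within_ext S (fun y => psp gam Q y * q y)); auto.
  - intros y Sy. symmetry. apply Hsp_derive_eq; auto.
  - apply is_derive_within_mult; auto.
    exact (is_derive_within_comp S (sigmoid gam) Q z _ _ (HQ z Sz) (is_derive_sigmoid gam gam_pos _)). }
rewrite (filterlim_locally_unique _ _ _ (Hf2 z Sz) Hpq). ring.
Qed.

Lemma q_derivable z : S z -> exists dq, is_derive_within S q z dq.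
Proof.
intros Sz. eexists.
apply (is_derive_within_ext S (fun y => f1 y * (1 + exp (- Q y / gam)))); auto.
- intros y Sy. rewrite Hsp_derive_eq by auto. unfold psp.
  pose proof (exp_pos (- Q y / gam)). field. lra.
- apply is_derive_within_mult; [auto|].
  exact (is_derive_within_comp S (fun v => 1 + exp (- v / gam)) Q z _ _ (HQ z Sz)
           (is_derive_sigmoid_denom gam gam_pos _)).
Qed.

Lemma Hsp_second_derive_nonneg_iff z : S z ->
  (0 <= f2 z <->
   forall dq, is_derive_within S q z dq -> dq + / gam * (1 - psp gam Q z) * q z ^ 2 >= 0).
Proof.
intros Sz. pose proof (sigmoid_pos gam (Q z)) as Hp. change (0 < psp gam Q z) in Hp. split.
- intros H dq Hq. rewrite (Hsp_second_derive_eq z dq Sz Hq) in H.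
  apply Rle_ge, (Rmult_le_reg_l (psp gam Q z)); lra.
- intros H. destruct (q_derivable z Sz) as [dq Hq].
  rewrite (Hsp_second_derive_eq z dq Sz Hq).
  specialize (H dq Hq). apply Rmult_le_pos; lra.
Qed.

End SoftplusOfQ.

Theorem corollaryG1 (S : R -> Prop) (gam : R) (Q q : R -> R) :
  is_interval S ->
  (exists a b, S a /\ S b /\ a < b) ->
  0 < gam ->
  (forall z, S z -> is_derive_within S Q z (q z)) ->
  C2_on S (Hsp gam Q) ->
  ((forall s dHs, S s -> is_derive_within S (Hsp gam Q) s dHs ->
      convex_on S (fun sh => matching_loss (Hsp gam Q) dHs s sh))
   <->
   (forall z dq, S z -> is_derive_within S q z dq ->
      dq + / gam * (1 - psp gam Q z) * (q z) ^ 2 >= 0)).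
Proof.
intros HI [a [b [Sa [Sb ab]]]] Hgam HQ [f1 [f2 HC]].
(* the continuity of H'' provided by [C2_on] is not needed *)
assert (Hproper : forall z, S z -> ProperFilter' (punctured S z))
  by (intros; apply (punctured_proper_in_interval S a b); auto).
assert (Hf1 : forall z, S z -> is_derive_within S (Hsp gam Q) z (f1 z)) by apply HC.
assert (Hf2 : forall z, S z -> is_derive_within S f1 z (f2 z)) by apply HC.
assert (Hconvex : convex_on S (Hsp gam Q) <-> forall z, S z -> 0 <= f2 z)
  by (apply (convex_on_iff_second_derive_nonneg S _ f1 f2 a b); auto; intros; split; auto).
split.
- intros Hml z dq Sz Hq.
  apply (Hsp_second_derive_nonneg_iff S gam Q q f1 f2); auto.
  apply Hconvex; auto.
  apply (convex_on_affine_shift S (fun sh => matching_loss (Hsp gam Q) (f1 a) a sh) _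
           (f1 a) (Hsp gam Q a - a * f1 a)); [intros x; unfold matching_loss; ring|].
  apply Hml; auto.
- intros Hcond s dHs Ss _.
  apply (convex_on_affine_shift S (Hsp gam Q) _ (- dHs) (s * dHs - Hsp gam Q s));
    [intros x; unfold matching_loss; ring|].
  apply Hconvex. intros z Sz.
  apply (Hsp_second_derive_nonneg_iff S gam Q q f1 f2); auto.
Qed.
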